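(* Let $\tau>1$ and consider two candidates $P,Q$. Weighted Majority Rule 2 (defined in the context) has distortion at most $\max\big\{\frac{3\tau-1}{\tau+1},\frac{\tau+2}{\tau}\big\}$; i.e., if it selects $P$ then $SC(P)\le \max\{\frac{3\tau-1}{\tau+1},\frac{\tau+2}{\tau}\}\,SC(Q)$.
   Context: Voters $N=\{1,\dots,n\}$ and candidates are points of an arbitrary metric space $(X,d)$. Voter $i$ prefers $P$ to $Q$ only if $d(i,P)\le d(i,Q)$, with preference strength $\alpha_i^{PQ}=d(i,Q)/d(i,P)\ge1$. $SC(Y)=\sum_{i\in N}d(i,Y)$. For two candidates and threshold $\tau$, the information available is every voter's preferred candidate and whether its preference strength is $>\tau$ (strong) or $\le\tau$ (weak). Let $A_2,A_1$ be the voters preferring $P$ with strong, resp. weak, preference, and $B_2,B_1$ likewise for $Q$. Weighted Majority Rule 2: give weight $\frac{\tau+1}{\tau-1}$ to each strong voter and weight $1$ to each weak voter, and select $P$ if $\frac{\tau+1}{\tau-1}|A_2|+|A_1|\ge|B_1|+\frac{\tau+1}{\tau-1}|B_2|$, otherwise $Q$. *)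

From Stdlib Require Import Reals.
Open Scope R_scope.

Record metric (X : Type) (d : X -> X -> R) : Prop := {
  metric_nonneg : forall x y, 0 <= d x y;
  metric_refl   : forall x, d x x = 0;
  metric_sep    : forall x y, d x y = 0 -> x = y;
  metric_sym    : forall x y, d x y = d y x;
  metric_tri    : forall x y z, d x z <= d x y + d y z
}.

Fixpoint rsum (n : nat) (f : nat -> R) : R :=
  match n with
  | O => 0
  | S k => rsum k f + f k
  end.

(* social cost SC(Y) = sum_i d(i, Y); voter i is located at v i *)
Definition SC {X : Type} (d : X -> X -> R) (n : nat) (v : nat -> X) (Y : X) : R :=
  rsum n (fun i => d (v i) Y).

(* Preference profile consistency: prefP i = true means voter i prefers P,
   false means it prefers Q; a voter prefers P to Q only if d(i,P) <= d(i,Q). *)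
Definition consistent {X : Type} (d : X -> X -> R) (n : nat) (v : nat -> X)
  (P Q : X) (prefP : nat -> bool) : Prop :=
  forall i, (i < n)%nat ->
    (prefP i = true -> d (v i) P <= d (v i) Q) /\
    (prefP i = false -> d (v i) Q <= d (v i) P).

(* Preference strength alpha_i^{AB} = d(i,B)/d(i,A) > tau, written without
   division: d(i,B) > tau * d(i,A)  (alpha = +infinity when d(i,A) = 0 < d(i,B),
   alpha = 1 when both distances are 0). *)
Definition wmr2_weight {X : Type} (d : X -> X -> R) (tau : R) (x A B : X) : R :=
  if Rlt_dec (tau * d x A) (d x B) then (tau + 1) / (tau - 1) else 1.

(* Weighted score of P: (tau+1)/(tau-1) |A_2| + |A_1| *)
Definition scoreP {X : Type} (d : X -> X -> R) (tau : R) (n : nat) (v : nat -> X)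
  (P Q : X) (prefP : nat -> bool) : R :=
  rsum n (fun i => if prefP i then wmr2_weight d tau (v i) P Q else 0).

(* Weighted score of Q: |B_1| + (tau+1)/(tau-1) |B_2| *)
Definition scoreQ {X : Type} (d : X -> X -> R) (tau : R) (n : nat) (v : nat -> X)
  (P Q : X) (prefP : nat -> bool) : R :=
  rsum n (fun i => if prefP i then 0 else wmr2_weight d tau (v i) Q P).

Definition wmr2_selects_P {X : Type} (d : X -> X -> R) (tau : R) (n : nat)
  (v : nat -> X) (P Q : X) (prefP : nat -> bool) : Prop :=
  scoreQ d tau n v P Q prefP <= scoreP d tau n v P Q prefP.

(* Write a = d(i,P), b = d(i,Q) for a voter i and δ = d(P,Q), and let
   c = max((3τ-1)/(τ+1), (τ+2)/τ).  The proof charges every voter: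
   its contribution (τ+1)(a - c·b) to (τ+1)(SC(P) - c·SC(Q)) is at most
   (τ-1)·δ times its "vote balance" (its weight if it votes Q, minus its
   weight if it votes P).  This is checked separately for the four voter
   classes (strong/weak supporters of P/Q) as inequalities between real
   numbers that only use the triangle inequalities δ <= a + b and
   a <= b + δ.  Summing over voters, the balances add up to
   scoreQ - scoreP, which is <= 0 when the rule selects P; hence
   SC(P) <= c·SC(Q). *)

From Stdlib Require Import Reals Lra Lia Psatz.
Open Scope R_scope.

Lemma rsum_le (n : nat) (f g : nat -> R) :
  (forall i, (i < n)%nat -> f i <= g i) -> rsum n f <= rsum n g.
Proof.
  induction n as [|n IH]; intros Hfg; simpl; [lra|].
  assert (rsum n f <= rsum n g) by (apply IH; intros; apply Hfg; lia).
  assert (f n <= g n) by (apply Hfg; lia).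
  lra.
Qed.

Lemma rsum_minus (n : nat) (f g : nat -> R) :
  rsum n (fun i => f i - g i) = rsum n f - rsum n g.
Proof. induction n as [|n IH]; simpl; [ring | rewrite IH; ring]. Qed.

Lemma rsum_scal (n : nat) (k : R) (f : nat -> R) :
  rsum n (fun i => k * f i) = k * rsum n f.
Proof. induction n as [|n IH]; simpl; [ring | rewrite IH; ring]. Qed.

(* Per-voter inequalities, with a = d(i,P), b = d(i,Q), δ = d(P,Q).
   The weak classes need (τ+1)c >= 3τ-1, the strong P-supporters need
   τc >= τ+2, and the strong Q-supporters only need c >= 1. *)
Section VoterClasses.

Variables tau c a b delta : R.
Hypothesis Htau : 1 < tau.
Hypothesis Ha : 0 <= a.
Hypothesis Hb : 0 <= b.
Hypothesis Htri_delta : delta <= a + b.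
Hypothesis Htri_a : a <= b + delta.

Lemma strong_P_voter (Hc : tau + 2 <= tau * c) (Hstrong : tau * a < b) :
  (tau + 1) * (a - c * b) <= - (tau + 1) * delta.
Proof.
  assert (Hab : tau * (a + delta) <= tau * (c * b)) by nra.
  assert (a + delta <= c * b) by nra.
  nra.
Qed.

Lemma weak_P_voter (Hc : 3 * tau - 1 <= (tau + 1) * c) (Hpref : a <= b) :
  (tau + 1) * (a - c * b) <= - (tau - 1) * delta.
Proof.
  assert ((3 * tau - 1) * b <= (tau + 1) * c * b) by (apply Rmult_le_compat_r; lra).
  nra.
Qed.

Lemma strong_Q_voter (Hc : 1 <= c) :
  (tau + 1) * (a - c * b) <= (tau + 1) * delta.
Proof.
  assert (b <= c * b) by (rewrite <- (Rmult_1_l b) at 1; apply Rmult_le_compat_r; lra).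
  nra.
Qed.

Lemma weak_Q_voter (Hc : 3 * tau - 1 <= (tau + 1) * c) (Hweak : a <= tau * b) :
  (tau + 1) * (a - c * b) <= (tau - 1) * delta.
Proof.
  assert ((3 * tau - 1) * b <= (tau + 1) * c * b) by (apply Rmult_le_compat_r; lra).
  nra.
Qed.

End VoterClasses.

Definition vote_balance {X : Type} (d : X -> X -> R) (tau : R) (x P Q : X)
  (b : bool) : R :=
  (if b then 0 else wmr2_weight d tau x Q P)
  - (if b then wmr2_weight d tau x P Q else 0).

Lemma score_difference {X : Type} (d : X -> X -> R) (tau : R) (n : nat)
  (v : nat -> X) (P Q : X) (prefP : nat -> bool) :
  scoreQ d tau n v P Q prefP - scoreP d tau n v P Q prefP
  = rsum n (fun i => vote_balance d tau (v i) P Q (prefP i)).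
Proof. unfold scoreQ, scoreP, vote_balance. now rewrite rsum_minus. Qed.

Lemma voter_charge (X : Type) (d : X -> X -> R) (Hd : metric X d)
  (tau c : R) (Htau : 1 < tau)
  (Hc_weak : 3 * tau - 1 <= (tau + 1) * c) (Hc_strong : tau + 2 <= tau * c)
  (x P Q : X) (b : bool)
  (Hb : (b = true -> d x P <= d x Q) /\ (b = false -> d x Q <= d x P)) :
  (tau + 1) * (d x P - c * d x Q) <= (tau - 1) * d P Q * vote_balance d tau x P Q b.
Proof.
  destruct Hb as [HprefP HprefQ].
  pose proof (metric_nonneg _ _ Hd x P) as Ha.
  pose proof (metric_nonneg _ _ Hd x Q) as Hb.
  assert (Htri_delta : d P Q <= d x P + d x Q).
  { rewrite (metric_sym _ _ Hd x P). apply (metric_tri _ _ Hd). }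
  assert (Htri_a : d x P <= d x Q + d P Q).
  { rewrite (metric_sym _ _ Hd P Q). apply (metric_tri _ _ Hd). }
  assert (Hstrong_weight : (tau - 1) * ((tau + 1) / (tau - 1)) = tau + 1)
    by (field; lra).
  unfold vote_balance, wmr2_weight.
  destruct b.
  - specialize (HprefP eq_refl).
    destruct (Rlt_dec (tau * d x P) (d x Q)) as [Hs|Hs].
    + replace ((tau - 1) * d P Q * (0 - (tau + 1) / (tau - 1)))
        with (- ((tau - 1) * ((tau + 1) / (tau - 1))) * d P Q) by ring.
      rewrite Hstrong_weight. now apply strong_P_voter.
    + replace ((tau - 1) * d P Q * (0 - 1)) with (- (tau - 1) * d P Q) by ring.
      now apply weak_P_voter.
  - destruct (Rlt_dec (tau * d x Q) (d x P)) as [Hs|Hs].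
    + replace ((tau - 1) * d P Q * ((tau + 1) / (tau - 1) - 0))
        with ((tau - 1) * ((tau + 1) / (tau - 1)) * d P Q) by ring.
      rewrite Hstrong_weight. apply strong_Q_voter; nra.
    + replace ((tau - 1) * d P Q * (1 - 0)) with ((tau - 1) * d P Q) by ring.
      apply weak_Q_voter; lra.
Qed.

Lemma distortion_constant_bounds (tau : R) (Htau : 1 < tau) :
  let c := Rmax ((3 * tau - 1) / (tau + 1)) ((tau + 2) / tau) in
  3 * tau - 1 <= (tau + 1) * c /\ tau + 2 <= tau * c.
Proof.
  intros c.
  pose proof (Rmax_l ((3 * tau - 1) / (tau + 1)) ((tau + 2) / tau)) as Hl.
  pose proof (Rmax_r ((3 * tau - 1) / (tau + 1)) ((tau + 2) / tau)) as Hr.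
  fold c in Hl, Hr.
  assert ((tau + 1) * ((3 * tau - 1) / (tau + 1)) = 3 * tau - 1) by (field; lra).
  assert (tau * ((tau + 2) / tau) = tau + 2) by (field; lra).
  split; nra.
Qed.

Theorem mainTheorem4 (X : Type) (d : X -> X -> R) (Hd : metric X d)
  (tau : R) (Htau : 1 < tau) (n : nat) (v : nat -> X) (P Q : X)
  (prefP : nat -> bool) (Hcons : consistent d n v P Q prefP)
  (Hsel : wmr2_selects_P d tau n v P Q prefP) :
  SC d n v P <= Rmax ((3 * tau - 1) / (tau + 1)) ((tau + 2) / tau) * SC d n v Q.
Proof.
  destruct (distortion_constant_bounds tau Htau) as [Hc_weak Hc_strong].
  set (c := Rmax ((3 * tau - 1) / (tau + 1)) ((tau + 2) / tau)) in *.
  assert (Hcharge : (tau + 1) * (SC d n v P - c * SC d n v Q)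
                    <= (tau - 1) * d P Q
                       * (scoreQ d tau n v P Q prefP - scoreP d tau n v P Q prefP)).
  { unfold SC. rewrite score_difference, <- (rsum_scal n c), <- rsum_minus,
      <- !rsum_scal.
    apply rsum_le. intros i Hi.
    apply voter_charge; auto. }
  (* Selecting P makes the total balance nonpositive. *)
  unfold wmr2_selects_P in Hsel.
  pose proof (metric_nonneg _ _ Hd P Q).
  assert (0 <= (tau - 1) * d P Q) by nra.
  nra.
Qed.
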